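(* Let $P=\{x\in\mathbb{R}^n: Ax\ge b\}$ be full-dimensional and pointed, $c\in\mathbb{R}^n$, and $\bar x$ a basic optimal solution of $\min\{c^\top x:x\in P\}$. Let $\mathcal{T}$ be finite and $P^t=\{x\in P:D^tx\ge D^t_0\}$, $t\in\mathcal{T}$. For each $t$, let $p^t$ be a basic optimal solution of $\min\{c^\top x:x\in P^t\}$ and $C^t$ the basis cone at $p^t$ with extreme rays $r^{t1},\dots,r^{tn}$. Let $p^*\in\arg\min\{c^\top p^t: t\in\mathcal{T}\}$. If $\tilde c^\top\tilde p^*>0$, then PRLP$^0$ is feasible.
   Context: A cobasis of a basic solution is a set of $n$ linearly independent defining inequalities tight at it; the basis cone $C^t$ is the intersection of the $n$ cobasic half-spaces at $p^t$. Nonbasic space: fix a cobasis $\{a_i^\top x\ge b_i: i\in N\}$ ($|N|=n$) of $\bar x$ in $P$; for a point $x$ let $\tilde x=(a_i^\top x-b_i)_{i\in N}$ and for a ray $r$ let $\tilde r=(a_i^\top r)_{i\in N}$ (so $\bar x\mapsto 0$), and let $\tilde c\in\mathbb{R}^n$ be the vector with $c^\top x=c^\top\bar x+\tilde c^\top\tilde x$ for all $x\in\mathbb{R}^n$. PRLP$^0$ is the system in $\tilde\alpha\in\mathbb{R}^n$: $\tilde\alpha^\top\tilde p^t\ge1$ for all $t\in\mathcal{T}$ and $\tilde\alpha^\top\tilde r^{tj}\ge0$ for all $t\in\mathcal{T}$, $j\in[n]$. *)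

From HB Require Import structures.
From mathcomp Require Import all_boot all_order all_algebra.
Set Implicit Arguments. Unset Strict Implicit. Unset Printing Implicit Defensive.
Import Order.TTheory GRing.Theory Num.Theory.
Local Open Scope ring_scope.

Definition dotv (R : realFieldType) (n : nat) (u v : 'cV[R]_n) : R :=
  \sum_(i < n) u i 0 * v i 0.

Definition in_poly (R : realFieldType) (m n : nat) (M : 'M[R]_(m, n)) (h : 'cV[R]_m)
  (x : 'cV[R]_n) : Prop := forall i, h i 0 <= (M *m x) i 0.

Definition full_dim (R : realFieldType) (m n : nat) (M : 'M[R]_(m, n)) (h : 'cV[R]_m) : Prop :=
  exists x0 : 'cV[R]_n, exists eps : R, 0 < eps /\
    forall y : 'cV[R]_n, (forall j, `|y j 0 - x0 j 0| <= eps) -> in_poly M h y.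

Definition pointed (R : realFieldType) (m n : nat) (M : 'M[R]_(m, n)) (h : 'cV[R]_m) : Prop :=
  forall x d : 'cV[R]_n, in_poly M h x -> (forall l : R, in_poly M h (x + l *: d)) -> d = 0.

Definition cobasis (R : realFieldType) (m n : nat) (M : 'M[R]_(m, n)) (h : 'cV[R]_m)
  (x : 'cV[R]_n) (N : 'I_n -> 'I_m) : Prop :=
  (forall j, (M *m x) (N j) 0 = h (N j) 0) /\
  (\matrix_(j < n, l < n) M (N j) l) \in unitmx.

Definition lp_optimal (R : realFieldType) (m n : nat) (M : 'M[R]_(m, n)) (h : 'cV[R]_m)
  (c x : 'cV[R]_n) : Prop :=
  in_poly M h x /\ forall y, in_poly M h y -> dotv c x <= dotv c y.

(* Nonnegative reduced costs: c is a nonnegative combination of the cobasic rows. *)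
Definition dual_feasible (R : realFieldType) (m n : nat) (M : 'M[R]_(m, n))
  (c : 'cV[R]_n) (N : 'I_n -> 'I_m) : Prop :=
  exists y : 'I_n -> R, (forall j, 0 <= y j) /\ c = \sum_(j < n) y j *: (row (N j) M)^T.

Definition optimal_cobasis (R : realFieldType) (m n : nat) (M : 'M[R]_(m, n)) (h : 'cV[R]_m)
  (c x : 'cV[R]_n) (N : 'I_n -> 'I_m) : Prop :=
  lp_optimal M h c x /\ cobasis M h x N /\ dual_feasible M c N.

Definition basis_cone (R : realFieldType) (m n : nat) (M : 'M[R]_(m, n)) (h : 'cV[R]_m)
  (N : 'I_n -> 'I_m) (x : 'cV[R]_n) : Prop :=
  forall j, h (N j) 0 <= (M *m x) (N j) 0.

(* r spans an extreme ray of the cone K (K a cone with apex 0). *)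
Definition extreme_ray (R : realFieldType) (n : nat) (K : 'cV[R]_n -> Prop) (r : 'cV[R]_n) : Prop :=
  K r /\ r != 0 /\
  forall u w, K u -> K w -> r = u + w -> exists l : R, 0 <= l /\ u = l *: r.

(* Nonbasic-space coordinates w.r.t. the cobasis N of A x >= b. *)
Definition nb_point (R : realFieldType) (m n : nat) (A : 'M[R]_(m, n)) (b : 'cV[R]_m)
  (N : 'I_n -> 'I_m) (x : 'cV[R]_n) : 'cV[R]_n :=
  \col_(j < n) ((A *m x) (N j) 0 - b (N j) 0).

Definition nb_ray (R : realFieldType) (m n : nat) (A : 'M[R]_(m, n))
  (N : 'I_n -> 'I_m) (r : 'cV[R]_n) : 'cV[R]_n :=
  \col_(j < n) ((A *m r) (N j) 0).

Definition PRLP0_feasible (R : realFieldType) (n : nat) (T : finType)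
  (pt : T -> 'cV[R]_n) (rt : T -> 'I_n -> 'cV[R]_n) : Prop :=
  exists alpha : 'cV[R]_n,
    (forall t, 1 <= dotv alpha (pt t)) /\ (forall t j, 0 <= dotv alpha (rt t j)).

From HB Require Import structures.
From mathcomp Require Import all_boot all_order all_algebra.
From mathcomp Require Import lra.
Set Implicit Arguments. Unset Strict Implicit. Unset Printing Implicit Defensive.
Import Order.TTheory GRing.Theory Num.Theory.
Local Open Scope ring_scope.

(* The vector [alpha = ctil / s] with [s = ctil^T p~*] is feasible.  On points,
   [ctil^T p~t = c^T p^t - c^T xbar] is smallest at [p*], so [alpha^T p~t >= 1].
   On rays, [ctil^T r~ = c^T r] because [x |-> ctil^T x~] and [c^T x] differ by
   a constant; and [c^T r >= 0] since [c] is a nonnegative combination of the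
   cobasic rows at [p^t], which are nonnegative on the rays of the basis cone. *)

Section DotProduct.
Variables (R : realFieldType) (n : nat).
Implicit Types (u v w : 'cV[R]_n).

Lemma dotvDr u v w : dotv u (v + w) = dotv u v + dotv u w.
Proof. by rewrite /dotv -big_split; apply: eq_bigr => i _; rewrite mxE mulrDr. Qed.

Lemma dotvZl a u v : dotv (a *: u) v = a * dotv u v.
Proof. by rewrite /dotv mulr_sumr; apply: eq_bigr => i _; rewrite mxE mulrA. Qed.

Lemma dotv0r u : dotv u 0 = 0.
Proof. by rewrite /dotv big1 // => i _; rewrite mxE mulr0. Qed.

Lemma dotv_suml (I : finType) (F : I -> 'cV[R]_n) v :
  dotv (\sum_i F i) v = \sum_i dotv (F i) v.
Proof.
rewrite /dotv exchange_big; apply: eq_bigr => j _.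
by rewrite summxE mulr_suml.
Qed.

Lemma dotv_tr_row m (M : 'M[R]_(m, n)) i v : dotv (row i M)^T v = (M *m v) i 0.
Proof. by rewrite /dotv mxE; apply: eq_bigr => j _; rewrite !mxE. Qed.

End DotProduct.

Section Cobasis.
Variables (R : realFieldType) (m n : nat) (M : 'M[R]_(m, n)) (h : 'cV[R]_m).
Variable N : 'I_n -> 'I_m.

Lemma nb_pointD x d : nb_point M h N (x + d) = nb_point M h N x + nb_ray M N d.
Proof. by apply/matrixP => i j; rewrite /nb_point /nb_ray mulmxDr !mxE addrAC. Qed.

Lemma dotv_nb_ray (c ctil x0 : 'cV[R]_n) :
  (forall x, dotv c x = dotv c x0 + dotv ctil (nb_point M h N x)) ->
  forall d, dotv c d = dotv ctil (nb_ray M N d).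
Proof.
move=> Hc d; have := Hc d; have := Hc 0.
by rewrite -[in nb_point _ _ _ d](add0r d) nb_pointD dotvDr dotv0r; lra.
Qed.

Lemma basis_cone_dir_ge0 x d :
  cobasis M h x N -> basis_cone M h N (x + d) -> forall j, 0 <= (M *m d) (N j) 0.
Proof.
move=> [Htight _] Hd j; have := Hd j.
by rewrite mulmxDr mxE Htight; lra.
Qed.

Lemma dual_feasible_dotv_ge0 c d :
  dual_feasible M c N -> (forall j, 0 <= (M *m d) (N j) 0) -> 0 <= dotv c d.
Proof.
move=> [y [Hy ->]] Hd; rewrite dotv_suml; apply: sumr_ge0 => j _.
by rewrite dotvZl dotv_tr_row mulr_ge0.
Qed.

End Cobasis.

Theorem proposition2 (R : realFieldType) (m n : nat)
  (A : 'M[R]_(m, n)) (b : 'cV[R]_m) (c : 'cV[R]_n)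
  (xbar : 'cV[R]_n) (N0 : 'I_n -> 'I_m) (ctil : 'cV[R]_n)
  (T : finType) (k : T -> nat)
  (D : forall t : T, 'M[R]_(k t, n)) (D0 : forall t : T, 'cV[R]_(k t))
  (p : T -> 'cV[R]_n) (Nt : forall t : T, 'I_n -> 'I_(m + k t))
  (r : T -> 'I_n -> 'cV[R]_n) (tstar : T) :
  full_dim A b ->
  pointed A b ->
  lp_optimal A b c xbar ->
  cobasis A b xbar N0 ->
  (forall x : 'cV[R]_n, dotv c x = dotv c xbar + dotv ctil (nb_point A b N0 x)) ->
  (forall t, optimal_cobasis (col_mx A (D t)) (col_mx b (D0 t)) c (p t) (Nt t)) ->
  (forall t j, extreme_ray
       (fun d => basis_cone (col_mx A (D t)) (col_mx b (D0 t)) (Nt t) (p t + d)) (r t j)) ->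
  (forall t, dotv c (p tstar) <= dotv c (p t)) ->
  0 < dotv ctil (nb_point A b N0 (p tstar)) ->
  PRLP0_feasible (fun t => nb_point A b N0 (p t)) (fun t j => nb_ray A N0 (r t j)).
Proof.
move=> _ _ _ _ Hc Hopt Hray Hmin Hpos.
set s := dotv ctil (nb_point A b N0 (p tstar)).
exists (s^-1 *: ctil); split=> [t | t j]; rewrite dotvZl.
  rewrite ler_pdivlMl // mulr1.
  by have := Hmin t; have := Hc (p t); have := Hc (p tstar); rewrite -/s; lra.
apply: mulr_ge0; first by rewrite invr_ge0 ltW.
rewrite -(dotv_nb_ray Hc).
have [_ [Hcob Hdual]] := Hopt t.
have [Hcone _] := Hray t j.
exact: dual_feasible_dotv_ge0 Hdual (basis_cone_dir_ge0 Hcob Hcone).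
Qed.
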